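(* Let $0\le s<n$ and $A\in M_{s+1,n-s}$. There is a constant $K>0$ depending only on $A$ (and $n$) such that for every $1\le j\le n$ and every $w\in\mathcal S_{n+1,j}$ with $\|R_Ac(w)\|<1$ one has $\|w\|\le K\big(1+\|\pi_\bullet(w)\|\big)$.
   Context: $V=\mathbb R^{n+1}$ with basis $e_0,\dots,e_n$, $V_0=\mathrm{span}(e_1,\dots,e_n)$, $V_\bullet=\mathrm{span}(e_{s+1},\dots,e_n)$; $e_I=e_{i_1}\wedge\dots\wedge e_{i_j}$ for $I=\{i_1<\dots<i_j\}$; $\bigwedge(V)$ carries the inner product making $\{e_I\}$ orthonormal. $\mathcal S_{n+1,j}$ is the set of $w=v_1\wedge\dots\wedge v_j$ with $v_1,\dots,v_j\in\mathbb Z^{n+1}$ linearly independent. $\pi_\bullet$ is the orthogonal projection $\bigwedge^j(V)\to\bigwedge^j(V_\bullet)$. $c(w)_i=\sum_{J\subset\{1,\dots,n\},\#J=j-1}\langle e_i\wedge e_J,w\rangle e_J$. Index the columns of $A$ by $s+1,\dots,n$ and its rows by $0,\dots,s$; $R_A=(I_{s+1}\ A)\in M_{s+1,n+1}$, so $R_Ac(w)\in(\bigwedge^{j-1}V_0)^{s+1}$ has $i$-th component $c(w)_i+\sum_{k=s+1}^n a_{i,k}c(w)_k=\sum_J\langle(e_i+a_i)\wedge e_J,w\rangle e_J$, where $a_i=\sum_{k=s+1}^na_{i,k}e_k$; norms are Euclidean. *)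

From HB Require Import structures.
From mathcomp Require Import all_boot all_order all_algebra.
From mathcomp Require Import reals.
Set Implicit Arguments. Unset Strict Implicit. Unset Printing Implicit Defensive.
Import Order.TTheory GRing.Theory Num.Theory.
Local Open Scope ring_scope.

(* A family of j vectors in V = R^{n+1} is stored as the rows of a j x (n+1) matrix. *)

Definition intmx (R : realType) (j m : nat) (v : 'M[int]_(j, m)) : 'M[R]_(j, m) :=
  map_mx (fun z : int => z%:~R) v.

(* induced inner product on decomposable j-vectors:
   < u_1 /\ ... /\ u_j , w_1 /\ ... /\ w_j > = det ( <u_a, w_b> )_{a,b} *)
Definition wip (R : realType) (j m : nat) (U W : 'M[R]_(j, m)) : R :=
  \det (U *m W^T).

(* rows e_{i_1}, ..., e_{i_j} for I = {i_1 < ... < i_j} (enum of a set of ordinals is increasing) *)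
Definition erows (R : realType) (j n : nat) (I : {set 'I_n.+1}) : 'M[R]_(j, n.+1) :=
  \matrix_(a < j, k < n.+1) ((k == nth ord0 (enum I) a)%:R).

(* Plücker coordinate <e_I, w> of w = w_1 /\ ... /\ w_j *)
Definition plucker (R : realType) (j n : nat) (W : 'M[R]_(j, n.+1)) (I : {set 'I_n.+1}) : R :=
  wip (erows R j I) W.

(* ||w|| for the inner product making {e_I} orthonormal *)
Definition wnorm (R : realType) (j n : nat) (W : 'M[R]_(j, n.+1)) : R :=
  Num.sqrt (\sum_(I : {set 'I_n.+1} | #|I| == j) plucker W I ^+ 2).

(* ||pi_bullet(w)||, V_bullet = span(e_{s+1},...,e_n) *)
Definition pinorm (R : realType) (j n : nat) (s : nat) (W : 'M[R]_(j, n.+1)) : R :=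
  Num.sqrt (\sum_(I : {set 'I_n.+1} | (#|I| == j) && [forall k in I, (s < k)%N])
              plucker W I ^+ 2).

(* e_i + a_i, a_i = sum_{k=s+1}^n a_{i,k} e_k ; column k of A (k = s+1..n) is A i (k-s-1) *)
Definition avec (R : realType) (n s : nat) (A : 'M[R]_(s.+1, n - s)) (i : 'I_s.+1)
  : 'rV[R]_(n.+1) :=
  \row_(k < n.+1) (((k : nat) == i)%:R
                   + \sum_(l < n - s) (((k : nat) == s.+1 + l)%N)%:R * A i l).

(* rows e_i + a_i, e_{J_1}, ..., e_{J_{j-1}} for J = {J_1 < ... < J_{j-1}} *)
Definition crow (R : realType) (j n s : nat) (A : 'M[R]_(s.+1, n - s)) (i : 'I_s.+1)
  (J : {set 'I_n.+1}) : 'M[R]_(j, n.+1) :=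
  \matrix_(a < j, k < n.+1)
    (if (a : nat) == 0%N then avec A i 0 k else ((k == nth ord0 (enum J) a.-1)%:R)).

(* ||R_A c(w)||: i-th component is sum_J <(e_i + a_i) /\ e_J, w> e_J,
   J ranging over (j-1)-subsets of {1,...,n} *)
Definition RAc_norm (R : realType) (j n s : nat) (A : 'M[R]_(s.+1, n - s))
  (W : 'M[R]_(j, n.+1)) : R :=
  Num.sqrt (\sum_(i < s.+1)
             \sum_(J : {set 'I_n.+1} | (#|J| == j.-1) && (ord0 \notin J))
               wip (crow j A i J) W ^+ 2).

From HB Require Import structures.
From mathcomp Require Import all_boot all_order all_algebra all_fingroup.
From mathcomp Require Import reals.
From mathcomp Require Import lra zify.
Set Implicit Arguments. Unset Strict Implicit. Unset Printing Implicit Defensive.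
Import Order.TTheory GRing.Theory Num.Theory.
Local Open Scope ring_scope.

(* Only the Plücker coordinates <e_I, w> with I meeting {0, ..., s} need a
   bound.  Pick i in I with i <= s (i = 0 whenever 0 is in I) and put
   J = I \ {i}, a subset of {1, ..., n}.  Up to sign,
   <e_I, w> = <(e_i + a_i) /\ e_J, w> - sum_k a_{i,k} <e_k /\ e_J, w>;
   the first term is a coordinate of R_A c(w), hence of modulus < 1, and every
   e_k /\ e_J (k > s) has one index fewer in {0, ..., s}.  Induction on
   #(I meet {0, ..., s}) gives |<e_I, w>| <= B^d (1 + ||pi_bullet(w)||) with
   B = 1 + sum |a_{i,k}|. *)

Lemma ler_term_sum (R : numDomainType) (T : finType) (P : pred T) (F : T -> R) (x : T) :
  (forall y, 0 <= F y) -> P x -> F x <= \sum_(y | P y) F y.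
Proof. by move=> F_ge0 Px; rewrite (bigD1 x) //= lerDl sumr_ge0. Qed.

Lemma ler_norm_sqrt (R : rcfType) (x S : R) :
  0 <= S -> x ^+ 2 <= S -> `|x| <= Num.sqrt S.
Proof. by move=> S_ge0 xS; rewrite -sqrtr_sqr ler_sqrt. Qed.

Lemma sum_delta_nat (R : pzSemiRingType) (n p : nat) (x : 'I_n.+1 -> R) :
  (p < n.+1)%N -> \sum_(m < n.+1) ((m : nat) == p)%:R * x m = x (inord p).
Proof.
move=> lt_pn; rewrite (bigD1 (inord p)) //= inordK // eqxx mul1r big1 ?addr0 //.
move=> m ne_mp; case: eqP => [eq_mp | _]; last by rewrite mul0r.
by move: ne_mp; rewrite -eq_mp inord_val eqxx.
Qed.

Section BasisRows.

Variables (R : realType) (n : nat).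

Definition basis_rows (j : nat) (t : 'I_j -> 'I_n.+1) : 'M[R]_(j, n.+1) :=
  \matrix_(a < j, k < n.+1) ((k == t a)%:R).

Lemma normr_wip_basis_rows (j : nat) (t : 'I_j -> 'I_n.+1) (I : {set 'I_n.+1})
    (W : 'M[R]_(j, n.+1)) :
  injective t -> #|I| = j -> (forall a, t a \in I) ->
  `|wip (basis_rows t) W| = `|plucker W I|.
Proof.
move=> t_inj cardI tI.
have lt_index a : (index (t a) (enum I) < j)%N.
  by rewrite -cardI cardE index_mem mem_enum.
pose f a := Ordinal (lt_index a).
have f_inj : injective f.
  move=> a b /(congr1 val) /= eq_ab; apply: t_inj.
  by rewrite -(nth_index ord0 (_ : t a \in enum I)) ?mem_enum // eq_ab nth_index ?mem_enum.
have -> : basis_rows t = row_perm (perm f_inj) (erows R j I).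
  by apply/matrixP=> a k; rewrite !mxE permE /= nth_index ?mem_enum.
rewrite /plucker /wip row_permE -mulmxA det_mulmx det_perm normrM normrX normrN1.
by rewrite expr1n mul1r.
Qed.

Lemma wip_basis_rows_eq0 (j : nat) (t : 'I_j -> 'I_n.+1) (W : 'M[R]_(j, n.+1))
    (a1 a2 : 'I_j) :
  a1 != a2 -> t a1 = t a2 -> wip (basis_rows t) W = 0.
Proof.
move=> ne_a eq_t; rewrite /wip; apply: (determinant_alternate ne_a) => k.
by rewrite !mxE; apply: eq_bigr => m _; rewrite !mxE eq_t.
Qed.

Definition set_row0_basis (j : nat) (U : 'M[R]_(j.+1, n.+1)) (m : 'I_n.+1) :
    'M[R]_(j.+1, n.+1) :=
  \matrix_(a < j.+1, k < n.+1) (if a == ord0 then (k == m)%:R else U a k).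

Lemma wip_expand_row0 (j : nat) (U W : 'M[R]_(j.+1, n.+1)) :
  wip U W = \sum_m U ord0 m * wip (set_row0_basis U m) W.
Proof.
rewrite /wip (expand_det_row _ ord0).
have cofactorE m k :
    cofactor (set_row0_basis U m *m W^T) ord0 k = cofactor (U *m W^T) ord0 k.
  rewrite /cofactor; congr (_ * \det _).
  apply/matrixP => a b; rewrite !mxE; apply: eq_bigr => c _.
  by rewrite !mxE eq_sym (negPf (neq_lift _ _)).
under [RHS]eq_bigr => m _ do rewrite (expand_det_row _ ord0) big_distrr.
rewrite exchange_big /=; apply: eq_bigr => k _.
rewrite mxE big_distrl; apply: eq_bigr => m _.
rewrite cofactorE mulrA; congr (_ * _ * _).
rewrite !mxE (bigD1 m) // big1 /=; first by rewrite !mxE !eqxx mul1r addr0.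
by move=> c /negPf ne_cm; rewrite !mxE eqxx ne_cm mul0r.
Qed.

(* [basis_rows (cons_index J m)] represents e_m /\ e_J. *)
Definition cons_index (j : nat) (J : {set 'I_n.+1}) (m : 'I_n.+1) (a : 'I_j.+1) :
    'I_n.+1 :=
  if a == ord0 then m else nth ord0 (enum J) a.-1.

Lemma wip_crow (j s : nat) (A : 'M[R]_(s.+1, n - s)) (i : 'I_s.+1) (m : 'I_n.+1)
    (J : {set 'I_n.+1}) (W : 'M[R]_(j.+1, n.+1)) :
  (m : nat) = i ->
  wip (crow j.+1 A i J) W =
    wip (basis_rows (cons_index J m)) W
    + \sum_(l < n - s) A i l * wip (basis_rows (cons_index J (inord (s.+1 + l)))) W.
Proof.
move=> mi; rewrite wip_expand_row0.
have row0E m' : set_row0_basis (crow j.+1 A i J) m' = basis_rows (cons_index J m').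
  apply/matrixP => a k; rewrite /crow /cons_index !mxE.
  by case: (altP (a =P ord0)) => [// | /negPf]; rewrite -val_eqE /= => ->.
under eq_bigr => m' _ do rewrite row0E /avec !mxE mulrDl mulr_suml.
rewrite big_split /= -mi sum_delta_nat // inord_val; congr (_ + _).
rewrite exchange_big; apply: eq_bigr => l _.
under eq_bigr => m' _ do rewrite mulrAC.
rewrite -mulr_suml sum_delta_nat 1?mulrC //.
by have := ltn_ord l; lia.
Qed.

Section ConsIndex.

Variables (j : nat) (J : {set 'I_n.+1}) (m : 'I_n.+1).
Hypothesis cardJ : #|J| = j.

Let nth_enumJ (a : 'I_j.+1) : a != ord0 -> nth ord0 (enum J) a.-1 \in J.
Proof.
rewrite -val_eqE /= -mem_enum => a_ne0; apply: mem_nth.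
by rewrite -cardE cardJ; have := ltn_ord a; lia.
Qed.

Lemma cons_index_mem (a : 'I_j.+1) : cons_index J m a \in m |: J.
Proof.
rewrite /cons_index; case: (altP (a =P ord0)) => [_ | a_ne0]; first exact: setU11.
by rewrite setU1r // nth_enumJ.
Qed.

Lemma cons_index_inj : m \notin J -> injective (cons_index (j := j) J m).
Proof.
move=> mJ a b; rewrite /cons_index.
case: (altP (a =P ord0)) => [-> | a_ne0]; case: (altP (b =P ord0)) => [-> | b_ne0] //.
- by move=> eq_m; move: mJ; rewrite eq_m nth_enumJ.
- by move=> eq_m; move: mJ; rewrite -eq_m nth_enumJ.
move: a_ne0 b_ne0; rewrite -!val_eqE /= => a_ne0 b_ne0.
have lt_a := ltn_ord a; have lt_b := ltn_ord b.
move=> /eqP; rewrite nth_uniq ?enum_uniq -?cardE ?cardJ //; [|lia|lia].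
by move=> /eqP eq_ab; apply/val_inj => /=; lia.
Qed.

Lemma wip_cons_index_mem (W : 'M[R]_(j.+1, n.+1)) :
  m \in J -> wip (basis_rows (cons_index J m)) W = 0.
Proof.
move=> mJ.
have lt_index : ((index m (enum J)).+1 < j.+1)%N.
  by rewrite ltnS -cardJ cardE index_mem mem_enum.
apply: (@wip_basis_rows_eq0 _ _ W ord0 (Ordinal lt_index)).
  by rewrite -val_eqE.
by rewrite /cons_index /= nth_index ?mem_enum.
Qed.

Lemma normr_wip_cons_index (W : 'M[R]_(j.+1, n.+1)) :
  m \notin J -> `|wip (basis_rows (cons_index J m)) W| = `|plucker W (m |: J)|.
Proof.
move=> mJ; apply: normr_wip_basis_rows (cons_index_inj mJ) _ cons_index_mem.
by rewrite cardsU1 mJ cardJ.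
Qed.

End ConsIndex.

End BasisRows.

Definition low_indices (n s : nat) : {set 'I_n.+1} := [set k : 'I_n.+1 | (k <= s)%N].

Lemma low_pivot (n s : nat) (I : {set 'I_n.+1}) :
  I :&: low_indices n s != set0 ->
  exists2 i, i \in I :&: low_indices n s & ord0 \notin I :\ i.
Proof.
case: (boolP (ord0 \in I)) => [I0 _ | I0 /set0Pn [i iI]].
  by exists ord0; rewrite !inE ?I0 ?eqxx.
by exists i; rewrite // !inE (negPf I0) andbF.
Qed.

Section PluckerBound.

Variables (R : realType) (n s j : nat) (A : 'M[R]_(s.+1, n - s)).
Variable W : 'M[R]_(j.+1, n.+1).

Local Notation B := (1 + \sum_i \sum_l `|A i l|).
Local Notation P := (pinorm s W).

Lemma plucker_le_pinorm (I : {set 'I_n.+1}) :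
  #|I| = j.+1 -> I :&: low_indices n s = set0 -> `|plucker W I| <= P.
Proof.
move=> cardI I_high; apply: ler_norm_sqrt; first by apply: sumr_ge0 => *; apply: sqr_ge0.
apply: (ler_term_sum (F := fun I => plucker W I ^+ 2)) => [? | ]; first exact: sqr_ge0.
rewrite cardI eqxx /=; apply/forall_inP => k kI; rewrite ltnNge.
apply: contra_eqN I_high => ks; apply/set0Pn; exists k; by rewrite !inE kI.
Qed.

Lemma wip_crow_le_RAc_norm (i : 'I_s.+1) (J : {set 'I_n.+1}) :
  #|J| = j -> ord0 \notin J -> `|wip (crow j.+1 A i J) W| <= RAc_norm A W.
Proof.
move=> cardJ J0; apply: ler_norm_sqrt.
  by apply: sumr_ge0 => *; apply: sumr_ge0 => *; apply: sqr_ge0.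
pose Fi i := \sum_(J : {set 'I_n.+1} | (#|J| == j.+1.-1) && (ord0 \notin J))
  wip (crow j.+1 A i J) W ^+ 2.
apply: le_trans (ler_term_sum (P := predT) (F := Fi) _ (isT : predT i)).
  apply: (ler_term_sum (F := fun J => wip (crow j.+1 A i J) W ^+ 2)) => [? |].
    exact: sqr_ge0.
  by rewrite cardJ eqxx J0.
by move=> ?; apply: sumr_ge0 => *; apply: sqr_ge0.
Qed.

Hypothesis RAc_lt1 : RAc_norm A W < 1.

Lemma plucker_le_step (I : {set 'I_n.+1}) (i : 'I_n.+1) (X : R) :
  #|I| = j.+1 -> i \in I :&: low_indices n s -> ord0 \notin I :\ i -> 1 <= X ->
  (forall k : 'I_n.+1, (s < k)%N -> k \notin I -> `|plucker W (k |: I :\ i)| <= X) ->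
  `|plucker W I| <= B * X.
Proof.
move=> cardI; rewrite inE => /andP [iI]; rewrite inE => i_le_s I0 X_ge1 IH.
set J := I :\ i.
have cardJ : #|J| = j by move: cardI; rewrite (cardsD1 i) iI add1n => -[].
have iJ : i \notin J by rewrite !inE eqxx.
pose i' : 'I_s.+1 := Ordinal (i_le_s : (i < s.+1)%N).
have := wip_crow A (i := i') (m := i) J W erefl.
set S := \sum_(l < n - s) _ => /esym/(canRL (addrK S)) expandI.
have high_le (l : 'I_(n - s)) :
    `|wip (basis_rows R (cons_index J (inord (s.+1 + l)))) W| <= X.
  have lt_sl : (s.+1 + l < n.+1)%N by have := ltn_ord l; lia.
  set k : 'I_n.+1 := inord _.
  have sk : (s < k)%N by rewrite inordK // addSn ltnS leq_addr.
  case: (boolP (k \in J)) => kJ.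
    by rewrite wip_cons_index_mem // normr0 (le_trans ler01).
  rewrite normr_wip_cons_index //; apply: IH => //.
  by apply: contra kJ => kI; rewrite !inE kI andbT; apply: contraTneq sk => ->; rewrite -leqNgt.
have sumA_le : \sum_l `|A i' l| <= B - 1.
  rewrite addrC addKr; apply: (ler_term_sum (P := predT) (F := fun i => \sum_l `|A i l|)) => //.
  by move=> ?; apply: sumr_ge0.
have crow_le1 : `|wip (crow j.+1 A i' J) W| <= 1.
  by apply/ltW/(le_lt_trans (wip_crow_le_RAc_norm _ cardJ I0)).
have sum_le : `|S| <= (\sum_l `|A i' l|) * X.
  apply: le_trans (ler_norm_sum _ _ _) _; rewrite mulr_suml; apply: ler_sum => l _.
  by rewrite normrM ler_wpM2l.
have sumX_le : (\sum_l `|A i' l|) * X <= (B - 1) * X.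
  by rewrite ler_wpM2r // (le_trans ler01).
have -> : `|plucker W I| = `|wip (basis_rows R (cons_index J i)) W|.
  by rewrite normr_wip_cons_index // setD1K.
rewrite expandI; apply: le_trans (ler_normB _ _) _.
move: sumX_le; rewrite mulrBl mul1r; lra.
Qed.

Lemma plucker_le_low (d : nat) (I : {set 'I_n.+1}) :
  #|I| = j.+1 -> (#|I :&: low_indices n s| <= d)%N ->
  `|plucker W I| <= B ^+ d * (1 + P).
Proof.
have B_ge1 : 1 <= B by rewrite lerDl; apply: sumr_ge0 => *; apply: sumr_ge0.
have one_P_le e : 1 + P <= B ^+ e * (1 + P).
  by rewrite ler_peMl ?addr_ge0 ?sqrtr_ge0 ?exprn_ege1.
have P_le e : P <= B ^+ e * (1 + P) by apply: le_trans (one_P_le e); rewrite lerDr.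
elim: d I => [|d IH] I cardI lowI.
  apply: le_trans (plucker_le_pinorm cardI _) (P_le 0).
  by apply/eqP; rewrite -cards_eq0 -leqn0.
case: (eqVneq (I :&: low_indices n s) set0) => [I_high | /low_pivot [i iIlow I0]].
  exact: le_trans (plucker_le_pinorm cardI I_high) (P_le _).
rewrite exprS -mulrA; apply: (plucker_le_step cardI iIlow I0).
  by apply: le_trans (one_P_le d); rewrite lerDl sqrtr_ge0.
move=> k sk kI; move: iIlow; rewrite inE => /andP [iI i_le_s].
have cardIi : #|I :\ i| = j by move: cardI; rewrite (cardsD1 i) iI add1n => -[].
apply: IH; first by rewrite cardsU1 !inE negb_and kI orbT cardIi.
have sub : (k |: I :\ i) :&: low_indices n s \subset (I :&: low_indices n s) :\ i.
  apply/subsetP => x; rewrite !inE => /andP [/orP [/eqP -> | /andP [xi xI]] xs].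
    by move: xs; rewrite leqNgt sk.
  by rewrite xi xI xs.
apply: leq_trans (subset_leq_card sub) _.
by move: lowI; rewrite (cardsD1 i (I :&: low_indices n s)) inE iI i_le_s.
Qed.

End PluckerBound.

Lemma wnorm_le (R : realType) (j n : nat) (W : 'M[R]_(j, n.+1)) (X : R) :
  0 <= X -> (forall I : {set 'I_n.+1}, #|I| = j -> `|plucker W I| <= X) ->
  wnorm W <= #|{set 'I_n.+1}|%:R * X.
Proof.
move=> X_ge0 le_X; set N : R := #|_|%:R.
have N_ge1 : 1 <= N by rewrite ler1n; apply/card_gt0P; exists set0.
have NX_ge0 : 0 <= N * X by rewrite mulr_ge0 // (le_trans ler01).
rewrite /wnorm -(ger0_norm NX_ge0) -sqrtr_sqr ler_sqrt ?sqr_ge0 //.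
apply: le_trans (_ : \sum_(I : {set 'I_n.+1}) X ^+ 2 <= _).
  rewrite big_mkcond /=; apply: ler_sum => I _; case: eqP => [cardI|_]; last exact: sqr_ge0.
  by rewrite -real_normK ?num_real // lerXn2r ?nnegrE ?le_X.
rewrite sumr_const -mulr_natl exprMn ler_wpM2r ?sqr_ge0 //.
by rewrite expr2 ler_peMl ?(le_trans ler01).
Qed.

Theorem lemma5p1 (R : realType) (n s : nat) (hs : (s < n)%N)
  (A : 'M[R]_(s.+1, n - s)) :
  exists K : R, 0 < K /\
    forall (j : nat), (1 <= j <= n)%N ->
    forall v : 'M[int]_(j, n.+1),
      row_free (intmx R v) ->
      RAc_norm A (intmx R v) < 1 ->
      wnorm (intmx R v) <= K * (1 + pinorm s (intmx R v)).
Proof.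
set B := 1 + \sum_i \sum_l `|A i l|.
have B_ge1 : 1 <= B by rewrite lerDl; apply: sumr_ge0 => *; apply: sumr_ge0.
exists (#|{set 'I_n.+1}|%:R * B ^+ n.+1); split.
  rewrite mulr_gt0 ?exprn_gt0 ?(lt_le_trans ltr01 B_ge1) // ltr0n.
  by apply/card_gt0P; exists set0.
case=> [|j] // _ v _ RAc_lt1; rewrite -mulrA.
apply: wnorm_le => [|I cardI].
  by rewrite mulr_ge0 ?addr_ge0 ?sqrtr_ge0 ?exprn_ge0 ?(le_trans ler01).
apply: (plucker_le_low RAc_lt1 cardI).
by rewrite (leq_trans (max_card _)) ?card_ord.
Qed.
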